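(* Let $M\ge1$ and for $d\in\{0,1\}$ let $\alpha_d(y)=\mathbb{P}(Y(d)=y,R(d)=1)$, $y\in[M]$. Suppose the response mechanism is the same in both arms, so that the identification set is \[\mathcal T=\Big\{\sum_{y=1}^M y\big(\alpha_1(y)-\alpha_0(y)\big)(w(y)+1):\ w\in\mathbb{R}^M,\ w\ge0,\ \sum_{y}\alpha_1(y)(w(y)+1)=1,\ \sum_y\alpha_0(y)(w(y)+1)=1\Big\}.\] Suppose there exists $y_0\in[M]$ such that $\alpha_1(y)\le\alpha_0(y)$ for all $y<y_0$ and $\alpha_1(y)\ge\alpha_0(y)$ for all $y\ge y_0$. Then $\tau\ge0$ for every $\tau\in\mathcal T$.
   Context: $Y(d)\in[M]$ and $R(d)\in\{0,1\}$ are the potential outcome and potential observation indicator under treatment $d$ in a randomized experiment; the common weight $w(y)$ plays the role of $1/\pi(y)-1$ where $\pi(y)=\mathbb{P}(R(1)=1\mid Y(1)=y)=\mathbb{P}(R(0)=1\mid Y(0)=y)$. $\mathcal T$ is the identification set for $\mathbb{E}[Y(1)-Y(0)]$ under this restriction. *)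

From mathcomp Require Import all_boot all_order all_algebra.
Set Implicit Arguments. Unset Strict Implicit. Unset Printing Implicit Defensive.
Import Order.TTheory GRing.Theory Num.Theory.
Local Open Scope ring_scope.

Definition ident_set (R : realFieldType) (M : nat) (a1 a0 : nat -> R) (tau : R) : Prop :=
  exists w : nat -> R,
    (forall y : nat, (1 <= y <= M)%N -> 0 <= w y) /\
    \sum_(1 <= y < M.+1) a1 y * (w y + 1) = 1 /\
    \sum_(1 <= y < M.+1) a0 y * (w y + 1) = 1 /\
    tau = \sum_(1 <= y < M.+1) (y%:R) * (a1 y - a0 y) * (w y + 1).

From mathcomp Require Import all_boot all_order all_algebra.
Import Order.TTheory GRing.Theory Num.Theory.
Local Open Scope ring_scope.

(* Subtracting c times the vanishing sum of the weighted differences d y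
   turns tau into sum_y (y - c) d y, and every term of that sum is
   nonnegative because d y changes sign from - to + exactly at c. *)

Lemma sumr_mul_ge0_sign_change (R : numDomainType) (f d : nat -> R)
    (m n c : nat) :
  {homo f : x y / (x <= y)%N >-> x <= y} ->
  (forall y, (m <= y < c)%N -> d y <= 0) ->
  (forall y, (c <= y < n)%N -> 0 <= d y) ->
  \sum_(m <= y < n) d y = 0 ->
  0 <= \sum_(m <= y < n) f y * d y.
Proof.
move=> f_homo d_lo d_hi d_sum0.
have -> : \sum_(m <= y < n) f y * d y
          = \sum_(m <= y < n) (f y - f c) * d y + f c * \sum_(m <= y < n) d y.
  rewrite mulr_sumr -big_split /=; apply: eq_bigr => y _.
  by rewrite mulrBl subrK.
rewrite d_sum0 mulr0 addr0 big_nat; apply: sumr_ge0 => y /andP [my yn].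
have [yc | cy] := ltnP y c.
- by rewrite mulr_le0 ?d_lo ?my // subr_le0 f_homo // ltnW.
- by rewrite mulr_ge0 ?d_hi ?cy // subr_ge0 f_homo.
Qed.

Theorem proposition6 (R : realFieldType) (M : nat) (a1 a0 : nat -> R)
  (hM : (1 <= M)%N)
  (ha1 : forall y : nat, (1 <= y <= M)%N -> 0 <= a1 y)
  (ha0 : forall y : nat, (1 <= y <= M)%N -> 0 <= a0 y)
  (hs1 : \sum_(1 <= y < M.+1) a1 y <= 1)
  (hs0 : \sum_(1 <= y < M.+1) a0 y <= 1)
  (y0 : nat) (hy0 : (1 <= y0 <= M)%N)
  (hlo : forall y : nat, (1 <= y)%N -> (y < y0)%N -> a1 y <= a0 y)
  (hhi : forall y : nat, (y0 <= y <= M)%N -> a0 y <= a1 y) :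
  forall tau : R, ident_set M a1 a0 tau -> 0 <= tau.
Proof.
move=> tau [w [w_ge0 [sum1 [sum0 ->]]]].
have w1_ge0 y : (1 <= y < M.+1)%N -> 0 <= w y + 1.
  by rewrite ltnS => yM; rewrite addr_ge0 ?w_ge0.
under eq_bigr => y _ do rewrite -mulrA.
apply: (@sumr_mul_ge0_sign_change _ _ _ _ _ y0).
- by move=> x y; rewrite ler_nat.
- move=> y /andP [y1 yy0]; rewrite mulr_le0_ge0 ?subr_le0 ?hlo ?w1_ge0 //.
  by rewrite y1 (ltn_trans yy0) // ltnS; case/andP: hy0.
- move=> y /andP [y0y yM]; rewrite mulr_ge0 ?subr_ge0 ?hhi ?w1_ge0 //.
    by rewrite y0y -ltnS.
  by rewrite yM (leq_trans _ y0y); case/andP: hy0.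
- by under eq_bigr => y _ do rewrite mulrBl; rewrite sumrB sum1 sum0 subrr.
Qed.
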